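(* Let $A$ be a densely defined closed operator in a complex Hilbert space $\mathcal{H}$ with $\operatorname{D}(A)\subset\operatorname{D}(A^* )$ and $\operatorname{Num}(A)\subset\{z:\operatorname{Im} z\ge 0\}$. Assume that for every sequence $a_n>0$ with $a_n\to0$ one has $K(a_n)\to\infty$, where $$K(a)=\inf\Big\{\tfrac{\operatorname{Im}\langle Av,v\rangle}{(\operatorname{Re}\langle Av,v\rangle)^2}: v\in\operatorname{D}(A),\|v\|=1,\ 0<|\langle Av,v\rangle|<a,\ \operatorname{Re}\langle Av,v\rangle>0\Big\}.$$ Let $\alpha\in\operatorname{Num}(A)$ with $0<\operatorname{Re}\alpha<1$, $0<\operatorname{Im}\alpha<1$, $|\alpha|<1$ and $(0,\alpha]\subset\operatorname{Num}(A)$, let $(\varepsilon_n)\subset(0,1)$ with $\varepsilon_n\to0$, and let $(u_n)\subset\operatorname{D}(A)$ with $\|u_n\|=1$ and $\langle Au_n,u_n\rangle=\varepsilon_n\alpha$. Let $(f_n)\subset\operatorname{D}(A)$ satisfy $\max(\sup_n\|f_n\|,\sup_n\|Af_n\|,\sup_n\|A^*f_n\|)<\infty$. Then $$\lim_{n\to\infty}\big(|\langle f_n,Au_n\rangle|+|\langle f_n,A^*u_n\rangle|\big)=0.$$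
   Context: $\operatorname{Num}(A)=\{\langle Af,f\rangle: f\in\operatorname{D}(A),\|f\|=1\}$; $(0,\alpha]$ denotes the half-open segment $\{t\alpha: 0<t\le1\}$. The infimum of the empty set is $+\infty$. *)

From Stdlib Require Export Reals.
Open Scope R_scope.

Record Cplx := mkC { Re : R; Im : R }.

Definition Cadd (z w : Cplx) : Cplx := mkC (Re z + Re w) (Im z + Im w).
Definition Cmul (z w : Cplx) : Cplx :=
  mkC (Re z * Re w - Im z * Im w) (Re z * Im w + Im z * Re w).
Definition Cconj (z : Cplx) : Cplx := mkC (Re z) (- Im z).
Definition C0 : Cplx := mkC 0 0.
Definition C1 : Cplx := mkC 1 0.
Definition Cm1 : Cplx := mkC (-1) 0.
Definition RtoC (r : R) : Cplx := mkC r 0.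
Definition Cabs (z : Cplx) : R := sqrt (Re z * Re z + Im z * Im z).

(** * Complex inner product spaces
    Inner product: linear in the first argument, conjugate-linear in the second. *)
Record PreHilbert := {
  carrier :> Type;
  vadd : carrier -> carrier -> carrier;
  vzero : carrier;
  vscal : Cplx -> carrier -> carrier;
  inner : carrier -> carrier -> Cplx;
  vadd_assoc : forall x y z, vadd x (vadd y z) = vadd (vadd x y) z;
  vadd_comm : forall x y, vadd x y = vadd y x;
  vadd_0 : forall x, vadd vzero x = x;
  vadd_opp : forall x, vadd x (vscal Cm1 x) = vzero;
  vscal_1 : forall x, vscal C1 x = x;
  vscal_assoc : forall a b x, vscal a (vscal b x) = vscal (Cmul a b) x;
  vscal_addl : forall a b x, vscal (Cadd a b) x = vadd (vscal a x) (vscal b x);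
  vscal_addr : forall a x y, vscal a (vadd x y) = vadd (vscal a x) (vscal a y);
  inner_addl : forall x y z, inner (vadd x y) z = Cadd (inner x z) (inner y z);
  inner_scall : forall a x y, inner (vscal a x) y = Cmul a (inner x y);
  inner_conj : forall x y, inner y x = Cconj (inner x y);
  inner_pos : forall x, 0 <= Re (inner x x);
  inner_def : forall x, inner x x = C0 -> x = vzero
}.

Arguments vadd {_}. Arguments vzero {_}. Arguments vscal {_}. Arguments inner {_}.

Definition vsub {H : PreHilbert} (x y : H) : H := vadd x (vscal Cm1 y).
Definition hnorm {H : PreHilbert} (x : H) : R := sqrt (Re (inner x x)).

Definition complete (H : PreHilbert) : Prop :=
  forall u : nat -> H,
    (forall eps, eps > 0 -> exists N, forall n m, (n >= N)%nat -> (m >= N)%nat ->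
        hnorm (vsub (u n) (u m)) < eps) ->
    exists l : H, forall eps, eps > 0 -> exists N, forall n, (n >= N)%nat ->
        hnorm (vsub (u n) l) < eps.

Definition hconverges {H : PreHilbert} (u : nat -> H) (l : H) : Prop :=
  forall eps, eps > 0 -> exists N, forall n, (n >= N)%nat -> hnorm (vsub (u n) l) < eps.

Definition linear_operator {H : PreHilbert} (D : H -> Prop) (A : H -> H) : Prop :=
  D vzero /\
  (forall x y, D x -> D y -> D (vadd x y) /\ A (vadd x y) = vadd (A x) (A y)) /\
  (forall a x, D x -> D (vscal a x) /\ A (vscal a x) = vscal a (A x)).

Definition densely_defined {H : PreHilbert} (D : H -> Prop) : Prop :=
  forall x : H, forall eps, eps > 0 -> exists y, D y /\ hnorm (vsub x y) < eps.

Definition closed_operator {H : PreHilbert} (D : H -> Prop) (A : H -> H) : Prop :=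
  forall (x : nat -> H) (l y : H),
    (forall n, D (x n)) -> hconverges x l -> hconverges (fun n => A (x n)) y ->
    D l /\ A l = y.

Definition is_adjoint {H : PreHilbert} (D : H -> Prop) (A : H -> H)
    (Ds : H -> Prop) (As : H -> H) : Prop :=
  (forall g, Ds g <-> exists h, forall f, D f -> inner (A f) g = inner f h) /\
  (forall g f, Ds g -> D f -> inner (A f) g = inner f (As g)).

Definition Num {H : PreHilbert} (D : H -> Prop) (A : H -> H) (z : Cplx) : Prop :=
  exists f, D f /\ hnorm f = 1 /\ inner (A f) f = z.

Definition Kset {H : PreHilbert} (D : H -> Prop) (A : H -> H) (a : R) (q : R) : Prop :=
  exists v, D v /\ hnorm v = 1 /\
    0 < Cabs (inner (A v) v) /\ Cabs (inner (A v) v) < a /\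
    Re (inner (A v) v) > 0 /\
    q = Im (inner (A v) v) / (Re (inner (A v) v) * Re (inner (A v) v)).

(** [K_ge D A a M] means  M <= K(a) = inf (Kset D A a)  (inf of empty = +oo). *)
Definition K_ge {H : PreHilbert} (D : H -> Prop) (A : H -> H) (a M : R) : Prop :=
  forall q, Kset D A a q -> M <= q.

Definition K_to_infty {H : PreHilbert} (D : H -> Prop) (A : H -> H) (a : nat -> R) : Prop :=
  forall M, exists N, forall n, (n >= N)%nat -> K_ge D A (a n) M.

(* Fix n and write u = u_n, w = f_n.  On the vectors u + s w (s complex) the
   form <Av, v> is the pencil  eps_n alpha + conj(s) p + s r + |s|^2 q  with
   p = <Au, w>, r = <Aw, u>, q = <Aw, w>.  Since Im <Av, v> >= 0 for every s,
   the imaginary slope |r - conj p|^2 is O(eps_n).  Along the direction of the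
   real slope r + conj p, at |s| = sqrt eps_n, the real part is about
   sqrt eps_n |r + conj p| while the imaginary part is O(eps_n); so the ratio
   Im / Re^2 bounded below by K is O(|r + conj p|^-2), and K(a) -> oo forces
   |r + conj p| to be small.  By the parallelogram law p and r are small, and
   <f_n, A u_n> = conj p, <f_n, A^* u_n> = r. *)

From Stdlib Require Import Reals Lra Psatz.
Open Scope R_scope.

Definition Cnorm2 (z : Cplx) : R := Re z * Re z + Im z * Im z.

Lemma Cext (z w : Cplx) : Re z = Re w -> Im z = Im w -> z = w.
Proof. destruct z, w; simpl; intros; subst; reflexivity. Qed.

Lemma cauchy_schwarz_R2 x y u v : (x * u + y * v) ^ 2 <= (x * x + y * y) * (u * u + v * v).
Proof. pose proof (pow2_ge_0 (x * v - y * u)). nra. Qed.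

Lemma nonneg_quadratic_slope_bound (c q B d1 d2 : R) :
  0 < B -> q <= B ->
  (forall x y, 0 <= c + (x * d1 + y * d2) + (x * x + y * y) * q) ->
  d1 * d1 + d2 * d2 <= 4 * B * c.
Proof.
  intros hB hq hpos.
  set (t := / (2 * B)).
  assert (ht : 2 * B * t = 1) by (unfold t; field; lra).
  assert (ht0 : 0 < t) by (unfold t; apply Rinv_0_lt_compat; lra).
  specialize (hpos (- t * d1) (- t * d2)).
  assert (hD : 0 <= d1 * d1 + d2 * d2) by nra.
  set (D := d1 * d1 + d2 * d2) in *.
  assert (hq' : t * t * D * q <= t * t * D * B) by (apply Rmult_le_compat_l; nra).
  assert (hval : c + (- t * d1 * d1 + - t * d2 * d2)
                 + (- t * d1 * (- t * d1) + - t * d2 * (- t * d2)) * q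
               = c - t * D + t * t * D * q) by (unfold D; ring).
  assert (hhalf : t * t * D * B = t * D / 2)
    by (replace (t * t * D * B) with (2 * B * t * (t * D) / 2) by field; rewrite ht; field).
  assert (hc : t * D <= 2 * c) by lra.
  replace D with (2 * B * t * D) by (rewrite ht; ring).
  nra.
Qed.

Lemma exists_direction_of_length (e s1 s2 : R) :
  0 <= e -> 0 < s1 * s1 + s2 * s2 ->
  exists x y, x * x + y * y = e /\
    x * s1 + y * s2 = sqrt e * sqrt (s1 * s1 + s2 * s2).
Proof.
  intros he hS.
  set (S := sqrt (s1 * s1 + s2 * s2)).
  assert (hS0 : 0 < S) by (apply sqrt_lt_R0; lra).
  assert (hSS : S * S = s1 * s1 + s2 * s2) by (apply sqrt_sqrt; lra).
  exists (sqrt e * s1 / S), (sqrt e * s2 / S). split.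
  - transitivity (sqrt e * sqrt e * ((s1 * s1 + s2 * s2) / (S * S))); [field; lra|].
    rewrite sqrt_sqrt, <- hSS by lra. field; lra.
  - transitivity (sqrt e * ((s1 * s1 + s2 * s2) / S)); [field; lra|].
    rewrite <- hSS. field; lra.
Qed.

Lemma bounds_of_sq_le (u b : R) : 0 <= b -> u * u <= b * b -> - b <= u <= b.
Proof. intros. split; nra. Qed.

Lemma sqrt_lt_of_lt_sq (X t : R) : 0 < t -> X < t * t -> sqrt X < t.
Proof.
  intros ht hX. destruct (Rle_or_lt 0 X) as [hX0 | hX0].
  - rewrite <- (sqrt_square t) by lra. apply sqrt_lt_1_alt. lra.
  - rewrite sqrt_neg_0; lra.
Qed.

Lemma Cabs_lt_of_Cnorm2_lt (z : Cplx) (t : R) : 0 < t -> Cnorm2 z < t * t -> Cabs z < t.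
Proof. apply sqrt_lt_of_lt_sq. Qed.

Lemma Cabs_Cconj (z : Cplx) : Cabs (Cconj z) = Cabs z.
Proof. unfold Cabs, Cconj; simpl. f_equal. ring. Qed.

Lemma Un_cv_0_eventually_lt (x : nat -> R) (c m : R) :
  (forall n, 0 <= x n) -> Un_cv x 0 -> 0 < c -> 0 < m ->
  exists N, forall n, (n >= N)%nat -> x n * c < m.
Proof.
  intros hx hcv hc hm. destruct (hcv (m / c)) as [N HN]; [apply Rdiv_lt_0_compat; lra|].
  exists N. intros n hn. specialize (HN n hn). unfold R_dist in HN.
  rewrite Rminus_0_r, Rabs_pos_eq in HN by apply hx.
  replace m with (m / c * c) by (field; lra). apply Rmult_lt_compat_r; lra.
Qed.

(* The value at [a + s b] of a sesquilinear form with matrix [z0 p; r q]; see [inner_pencil]. *)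
Definition pencil (z0 p r q s : Cplx) : Cplx :=
  Cadd (Cadd z0 (Cmul (Cconj s) p)) (Cmul s (Cadd r (Cmul (Cconj s) q))).

Lemma Re_pencil z0 p r q x y :
  Re (pencil z0 p r q (mkC x y)) =
  Re z0 + (x * (Re p + Re r) + y * (Im p - Im r)) + (x * x + y * y) * Re q.
Proof. unfold pencil, Cadd, Cmul, Cconj; simpl; ring. Qed.

Lemma Im_pencil z0 p r q x y :
  Im (pencil z0 p r q (mkC x y)) =
  Im z0 + (x * (Im p + Im r) + y * (Re r - Re p)) + (x * x + y * y) * Im q.
Proof. unfold pencil, Cadd, Cmul, Cconj; simpl; ring. Qed.

Section Pencil.
Variables (e B eta t K0 W : R) (z0 p r q c c' : Cplx).
Local Notation z s := (pencil z0 p r q s).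
Local Notation n s := (Re (pencil (RtoC 1) c c' (RtoC W) s)).
Hypotheses (he : 0 < e) (hB : 1 <= B) (heta : 0 < eta)
  (hsmall : e * (144 * (B * B)) < Rmin 1 (Rmin (eta * eta) (t * t)))
  (hK0 : 32 * B < K0 * (eta * eta))
  (hz0re : 0 <= Re z0 <= e) (hz0im : Im z0 <= e)
  (hp : Cnorm2 p <= B) (hr : Cnorm2 r <= B) (hq : Cnorm2 q <= B * B)
  (hc : Cnorm2 c <= B) (hc' : Cnorm2 c' <= B) (hW : 0 <= W <= B)
  (him : forall s, 0 <= Im (z s))
  (hK : forall s, 0 < n s -> 0 < Re (z s) -> Cnorm2 (z s) < t * t * (n s * n s) ->
          K0 * (Re (z s) * Re (z s)) <= Im (z s) * n s).

Let hsmall1 : e * (144 * (B * B)) < 1.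
Proof. pose proof (Rmin_l 1 (Rmin (eta * eta) (t * t))). lra. Qed.
Let hsmall_eta : e * (144 * (B * B)) < eta * eta.
Proof.
  pose proof (Rmin_r 1 (Rmin (eta * eta) (t * t))).
  pose proof (Rmin_l (eta * eta) (t * t)). lra.
Qed.
Let hsmall_t : e * (144 * (B * B)) < t * t.
Proof.
  pose proof (Rmin_r 1 (Rmin (eta * eta) (t * t))).
  pose proof (Rmin_r (eta * eta) (t * t)). lra.
Qed.
Let heB : e * B <= e * (B * B).
Proof. apply Rmult_le_compat_l; nra. Qed.
Let heB1 : e <= e * B.
Proof. rewrite <- (Rmult_1_r e) at 1. apply Rmult_le_compat_l; lra. Qed.
Let heB144 : e * B <= / 144.
Proof. lra. Qed.
Let hqre : - B <= Re q <= B.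
Proof. unfold Cnorm2 in hq. split; nra. Qed.
Let hqim : Im q <= B.
Proof. unfold Cnorm2 in hq. nra. Qed.

Lemma pencil_im_slope_bound :
  (Im p + Im r) * (Im p + Im r) + (Re r - Re p) * (Re r - Re p) <= 4 * B * e.
Proof.
  apply Rle_trans with (4 * B * Im z0); [|nra].
  apply nonneg_quadratic_slope_bound with (Im q); [lra | exact hqim |].
  intros x y. rewrite <- Im_pencil. apply him.
Qed.

Lemma pencil_norm_bounds x y : x * x + y * y = e -> 3 / 4 <= n (mkC x y) <= 2.
Proof.
  intro hxy. rewrite Re_pencil, hxy. simpl.
  set (nlin := x * (Re c + Re c') + y * (Im c - Im c')).
  assert (hnlin : nlin * nlin <= 4 * B * e).
  { pose proof (cauchy_schwarz_R2 x y (Re c + Re c') (Im c - Im c')) as hcs.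
    assert ((Re c + Re c') * (Re c + Re c') + (Im c - Im c') * (Im c - Im c') <= 4 * B).
    { unfold Cnorm2 in *.
      pose proof (pow2_ge_0 (Re c - Re c')). pose proof (pow2_ge_0 (Im c + Im c')). nra. }
    fold nlin in hcs. rewrite hxy in hcs. nra. }
  assert (- / 6 <= nlin <= / 6) by (apply bounds_of_sq_le; nra).
  assert (0 <= e * W <= e * B) by (split; [apply Rmult_le_pos | apply Rmult_le_compat_l]; lra).
  lra.
Qed.

Lemma pencil_im_bounds x y : x * x + y * y = e -> 0 <= Im (z (mkC x y)) <= 4 * (e * B).
Proof.
  intro hxy. split; [apply him|]. rewrite Im_pencil, hxy.
  set (lin := x * (Im p + Im r) + y * (Re r - Re p)).
  assert (hlin : lin * lin <= 2 * (e * B) * (2 * (e * B))).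
  { pose proof (cauchy_schwarz_R2 x y (Im p + Im r) (Re r - Re p)) as hcs.
    pose proof pencil_im_slope_bound. fold lin in hcs. rewrite hxy in hcs. nra. }
  apply bounds_of_sq_le in hlin; [|lra].
  assert (e * Im q <= e * B) by (apply Rmult_le_compat_l; lra).
  lra.
Qed.

Lemma pencil_re_bounds x y S :
  x * x + y * y = e -> x * (Re p + Re r) + y * (Im p - Im r) = sqrt e * S ->
  eta <= S -> S * S <= 4 * B ->
  sqrt e * eta / 2 <= Re (z (mkC x y)) /\ Re (z (mkC x y)) * Re (z (mkC x y)) <= 16 * (e * B).
Proof.
  intros hxy hdir hSeta hSB. rewrite Re_pencil, hxy, hdir.
  set (k := sqrt e).
  assert (hk : k * k = e) by (apply sqrt_sqrt; lra).
  assert (hk0 : 0 < k) by (apply sqrt_lt_R0; lra).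
  assert (hkB : 12 * (k * B) < eta).
  { assert (12 * (k * B) * (12 * (k * B)) = e * (144 * (B * B))) by (rewrite <- hk; ring).
    apply Rsqr_incrst_0; unfold Rsqr; nra. }
  assert (heq : - (e * B) <= e * Re q <= e * B)
    by (split; [|apply Rmult_le_compat_l]; nra).
  assert (hkeB : e * B <= k * eta / 12).
  { replace (e * B) with (k * (k * B)) by (rewrite <- hk; ring).
    replace (k * eta / 12) with (k * (eta / 12)) by field.
    apply Rmult_le_compat_l; lra. }
  assert (k * eta <= k * S) by (apply Rmult_le_compat_l; lra).
  split; [lra|].
  set (Zr := Re z0 + k * S + e * Re q).
  assert (Zr * Zr <= (k * S + 2 * (e * B)) * (k * S + 2 * (e * B)))
    by (apply Rmult_le_compat; unfold Zr; lra).
  assert (k * S * (k * S) <= e * (4 * B)).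
  { replace (k * S * (k * S)) with (e * (S * S)) by (rewrite <- hk; ring).
    apply Rmult_le_compat_l; lra. }
  assert (e * B * (e * B) <= e * B * / 144) by (apply Rmult_le_compat_l; lra).
  pose proof (pow2_ge_0 (k * S - 2 * (e * B))).
  assert ((k * S + 2 * (e * B)) * (k * S + 2 * (e * B)) + (k * S - 2 * (e * B)) ^ 2
          = 2 * (k * S * (k * S)) + 8 * (e * B * (e * B))) by ring.
  lra.
Qed.

(* The test value has [Im/Re^2 = O(1/S^2)], which the lower bound [K0] on that ratio forbids. *)
Lemma pencil_re_slope_small :
  (Re p + Re r) * (Re p + Re r) + (Im p - Im r) * (Im p - Im r) < eta * eta.
Proof.
  apply Rnot_le_lt; intro hS.
  destruct (exists_direction_of_length e (Re p + Re r) (Im p - Im r))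
    as [x [y [hxy hdir]]]; [lra | nra |].
  set (S := sqrt ((Re p + Re r) * (Re p + Re r) + (Im p - Im r) * (Im p - Im r))) in hdir.
  assert (hSS : S * S = (Re p + Re r) * (Re p + Re r) + (Im p - Im r) * (Im p - Im r))
    by (apply sqrt_sqrt; nra).
  assert (hSeta : eta <= S) by (apply Rsqr_incr_0_var; [unfold Rsqr; lra | apply sqrt_pos]).
  assert (hSB : S * S <= 4 * B).
  { rewrite hSS. unfold Cnorm2 in *.
    pose proof (pow2_ge_0 (Re p - Re r)). pose proof (pow2_ge_0 (Im p + Im r)). nra. }
  destruct (pencil_re_bounds x y S hxy hdir hSeta hSB) as [hre_lo hre_hi].
  destruct (pencil_im_bounds x y hxy) as [him_lo him_hi].
  pose proof (pencil_norm_bounds x y hxy) as hn.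
  specialize (hK (mkC x y)).
  set (Zr := Re (z (mkC x y))) in *. set (Zi := Im (z (mkC x y))) in *.
  set (N := n (mkC x y)) in *.
  assert (hk : sqrt e * sqrt e = e) by (apply sqrt_sqrt; lra).
  assert (0 < sqrt e) by (apply sqrt_lt_R0; lra).
  assert (hZ : Cnorm2 (z (mkC x y)) < t * t * (N * N)).
  { change (Zr * Zr + Zi * Zi < t * t * (N * N)).
    assert (Zi * Zi <= 4 * (e * B) * (4 * (e * B))) by (apply Rmult_le_compat; lra).
    assert (e * B * (e * B) <= e * B * / 144) by (apply Rmult_le_compat_l; lra).
    assert (3 / 4 * (3 / 4) <= N * N) by (apply Rmult_le_compat; lra).
    assert (t * t * (9 / 16) <= t * t * (N * N))
      by (apply Rmult_le_compat_l; [apply Rle_0_sqr | lra]).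
    lra. }
  specialize (hK ltac:(lra) ltac:(nra) hZ).
  assert (hZr2 : e * (eta * eta) / 4 <= Zr * Zr).
  { assert (E : sqrt e * eta / 2 * (sqrt e * eta / 2) = sqrt e * sqrt e * (eta * eta) / 4)
      by field.
    rewrite hk in E. rewrite <- E. apply Rmult_le_compat; nra. }
  assert (hK0pos : 0 < K0).
  { apply Rmult_lt_reg_r with (eta * eta); [apply Rmult_lt_0_compat|]; lra. }
  assert (K0 * (e * (eta * eta) / 4) <= K0 * (Zr * Zr)) by (apply Rmult_le_compat_l; lra).
  assert (Zi * N <= 4 * (e * B) * 2) by (apply Rmult_le_compat; lra).
  assert (K0 * (e * (eta * eta) / 4) = e * (K0 * (eta * eta)) / 4) by field.
  assert (e * (32 * B) < e * (K0 * (eta * eta))) by (apply Rmult_lt_compat_l; lra).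
  lra.
Qed.

(* Parallelogram law: [|p|^2 + |r|^2] is half the sum of the two slopes' squared norms. *)
Lemma pencil_coefficients_small : Cnorm2 p < eta * eta /\ Cnorm2 r < eta * eta.
Proof.
  pose proof pencil_im_slope_bound. pose proof pencil_re_slope_small.
  assert (2 * (Cnorm2 p + Cnorm2 r) =
    (Re p + Re r) * (Re p + Re r) + (Im p - Im r) * (Im p - Im r)
    + ((Im p + Im r) * (Im p + Im r) + (Re r - Re p) * (Re r - Re p)))
    by (unfold Cnorm2; ring).
  assert (0 <= Cnorm2 p /\ 0 <= Cnorm2 r) by (unfold Cnorm2; split; nra).
  lra.
Qed.

End Pencil.

Section InnerProduct.
Variable H : PreHilbert.

Lemma inner_addr (x y z : H) : inner x (vadd y z) = Cadd (inner x y) (inner x z).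
Proof.
  rewrite (inner_conj H (vadd y z) x), inner_addl, (inner_conj H y x), (inner_conj H z x).
  destruct (inner y x), (inner z x); unfold Cconj, Cadd; simpl; f_equal; ring.
Qed.

Lemma inner_scalr a (x y : H) : inner x (vscal a y) = Cmul (Cconj a) (inner x y).
Proof.
  rewrite (inner_conj H (vscal a y) x), inner_scall, (inner_conj H y x).
  destruct (inner y x), a; unfold Cconj, Cmul; simpl; f_equal; ring.
Qed.

Lemma inner_vzero_r (x : H) : inner x vzero = C0.
Proof.
  assert (E : inner x vzero = Cadd (inner x vzero) (inner x vzero))
    by (rewrite <- inner_addr, vadd_0; reflexivity).
  apply Cext; [apply (f_equal Re) in E | apply (f_equal Im) in E];
    unfold Cadd in E; simpl in *; lra.
Qed.

Definition hnorm2 (x : H) : R := Re (inner x x).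

Lemma hnorm2_ge0 (x : H) : 0 <= hnorm2 x.
Proof. apply inner_pos. Qed.

Lemma hnorm2_hnorm (x : H) : hnorm2 x = hnorm x * hnorm x.
Proof. unfold hnorm. rewrite sqrt_sqrt; [reflexivity | apply hnorm2_ge0]. Qed.

Lemma inner_self (x : H) : inner x x = RtoC (hnorm2 x).
Proof.
  apply Cext; [reflexivity|].
  pose proof (f_equal Im (inner_conj H x x)) as E. simpl in *. lra.
Qed.

Lemma hnorm2_eq0 (x : H) : hnorm2 x = 0 -> x = vzero.
Proof. intro h0. apply inner_def. rewrite inner_self, h0. reflexivity. Qed.

Lemma inner_pencil (a b c d : H) s :
  inner (vadd a (vscal s b)) (vadd c (vscal s d)) =
  pencil (inner a c) (inner a d) (inner b c) (inner b d) s.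
Proof. rewrite inner_addl, inner_scall, !inner_addr, !inner_scalr. reflexivity. Qed.

Lemma inner_scal_real k (x y : H) :
  inner (vscal (RtoC k) x) (vscal (RtoC k) y) = Cmul (RtoC (k * k)) (inner x y).
Proof.
  rewrite inner_scall, inner_scalr.
  destruct (inner x y); apply Cext; unfold Cmul, Cconj, RtoC; simpl; ring.
Qed.

(* Expand [|x + s y|^2 >= 0] with [s] a real multiple of [-<x,y>]. *)
Lemma cauchy_schwarz (x y : H) : Cnorm2 (inner x y) <= hnorm2 x * hnorm2 y.
Proof.
  destruct (Req_dec (hnorm2 y) 0) as [hy | hy].
  - rewrite hy, (hnorm2_eq0 y hy), inner_vzero_r. unfold Cnorm2, C0; simpl. lra.
  - assert (hpencil : forall s1 s2, 0 <= hnorm2 x + (s1 * (2 * Re (inner x y))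
        + s2 * (2 * Im (inner x y))) + (s1 * s1 + s2 * s2) * hnorm2 y).
    { intros s1 s2. pose proof (hnorm2_ge0 (vadd x (vscal (mkC s1 s2) y))) as hpos.
      unfold hnorm2 in *. rewrite inner_pencil, Re_pencil, (inner_conj H x y) in hpos.
      unfold Cconj in hpos; simpl in hpos. lra. }
    assert (hy0 : 0 < hnorm2 y)
      by (destruct (hnorm2_ge0 y) as [|E]; [assumption | congruence]).
    pose proof (nonneg_quadratic_slope_bound _ _ _ _ _ hy0 (Rle_refl _) hpencil).
    unfold Cnorm2. lra.
Qed.

End InnerProduct.

Arguments hnorm2 {H} x.

Lemma hnorm2_le_sq_succ (H : PreHilbert) (x : H) (M : R) : hnorm x <= M -> hnorm2 x <= M * M + 1.
Proof.
  intro hx. rewrite hnorm2_hnorm. pose proof (sqrt_pos (Re (inner x x))). unfold hnorm in *. nra.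
Qed.

Section Operator.
Variables (H : PreHilbert) (D : H -> Prop) (A : H -> H).
Hypothesis Hlin : linear_operator D A.

Lemma linear_operator_combination (u w : H) (s : Cplx) :
  D u -> D w ->
  D (vadd u (vscal s w)) /\ A (vadd u (vscal s w)) = vadd (A u) (vscal s (A w)).
Proof.
  intros Du Dw. destruct Hlin as [_ [Hadd Hscal]].
  destruct (Hscal s w Dw) as [Dsw Asw]. destruct (Hadd _ _ Du Dsw) as [Dv Av].
  split; [exact Dv|]. rewrite Av, Asw. reflexivity.
Qed.

Lemma normalize_in_domain (v : H) :
  D v -> 0 < hnorm2 v ->
  exists v', D v' /\ hnorm v' = 1 /\
    inner (A v') v' = Cmul (RtoC (/ hnorm2 v)) (inner (A v) v).
Proof.
  intros Dv hv. set (k := / sqrt (hnorm2 v)).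
  assert (hk : k * k = / hnorm2 v).
  { unfold k. rewrite <- Rinv_mult, sqrt_sqrt; lra. }
  destruct Hlin as [_ [_ Hscal]]. destruct (Hscal (RtoC k) v Dv) as [Dkv Akv].
  exists (vscal (RtoC k) v). split; [exact Dkv|]. split.
  - unfold hnorm. rewrite inner_scal_real, hk. simpl.
    replace (/ hnorm2 v * Re (inner v v) - 0 * Im (inner v v)) with 1; [apply sqrt_1|].
    fold (hnorm2 v). field. lra.
  - rewrite Akv, inner_scal_real, hk. reflexivity.
Qed.

Lemma Im_inner_A_nonneg (Hnum : forall z, Num D A z -> 0 <= Im z) (v : H) :
  D v -> 0 <= Im (inner (A v) v).
Proof.
  intro Dv. destruct (Req_dec (hnorm2 v) 0) as [hv | hv].
  - rewrite (hnorm2_eq0 H v hv), inner_vzero_r. simpl; lra.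
  - assert (hv0 : 0 < hnorm2 v)
      by (destruct (hnorm2_ge0 H v) as [|E]; [assumption | congruence]).
    destruct (normalize_in_domain v Dv hv0) as [v' [Dv' [hv' E]]].
    assert (him := Hnum _ (ex_intro _ v' (conj Dv' (conj hv' E)))).
    simpl in him. assert (0 < / hnorm2 v) by (apply Rinv_0_lt_compat; lra). nra.
Qed.

(* [K_ge] restated for vectors that are not normalized. *)
Definition homogeneous_K_ge (t K0 : R) : Prop :=
  forall v, D v -> 0 < hnorm2 v ->
    0 < Re (inner (A v) v) ->
    Cnorm2 (inner (A v) v) < t * t * (hnorm2 v * hnorm2 v) ->
    K0 * (Re (inner (A v) v) * Re (inner (A v) v)) <= Im (inner (A v) v) * hnorm2 v.

Lemma K_to_infty_homogeneous (a : nat -> R) (Ha : forall n, 0 < a n)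
  (HKa : K_to_infty D A a) (K0 : R) :
  exists t, 0 < t /\ homogeneous_K_ge t K0.
Proof.
  destruct (HKa K0) as [N HN]. exists (a N). split; [apply Ha|].
  intros v Dv hv. set (z := inner (A v) v). intros hre hz.
  destruct (normalize_in_domain v Dv hv) as [v' [Dv' [hv' E]]].
  set (h := hnorm2 v) in *.
  assert (hre' : Re (inner (A v') v') = Re z / h) by (rewrite E; simpl; unfold z; field; lra).
  assert (him' : Im (inner (A v') v') = Im z / h) by (rewrite E; simpl; unfold z; field; lra).
  assert (hn' : Cnorm2 (inner (A v') v') = Cnorm2 z / (h * h))
    by (unfold Cnorm2; rewrite hre', him'; field; lra).
  assert (hre0 : Re (inner (A v') v') > 0) by (rewrite hre'; apply Rdiv_lt_0_compat; lra).
  assert (habs : 0 < Cabs (inner (A v') v') < a N).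
  { split.
    - apply sqrt_lt_R0. unfold Cnorm2 in hn'. pose proof (Rle_0_sqr (Im (inner (A v') v'))).
      unfold Rsqr in *. nra.
    - apply Cabs_lt_of_Cnorm2_lt; [apply Ha|]. rewrite hn'.
      apply Rmult_lt_reg_r with (h * h); [nra|]. field_simplify; lra. }
  assert (hK := HN N (le_n N) _
    (ex_intro _ v' (conj Dv' (conj hv' (conj (proj1 habs) (conj (proj2 habs)
       (conj hre0 eq_refl))))))).
  rewrite hre', him' in hK.
  replace (Im z / h / (Re z / h * (Re z / h))) with (Im z * h / (Re z * Re z)) in hK
    by (field; lra).
  apply Rmult_le_compat_r with (r := Re z * Re z) in hK; [|nra].
  replace (Im z * h / (Re z * Re z) * (Re z * Re z)) with (Im z * h) in hK by (field; lra).
  exact hK.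
Qed.

End Operator.

Section OffDiagonal.
Variables (H : PreHilbert) (D : H -> Prop) (A : H -> H) (Ds : H -> Prop) (As : H -> H).
Hypotheses (Hlin : linear_operator D A) (Hadj : is_adjoint D A Ds As)
  (HDsub : forall x, D x -> Ds x) (Hnum : forall z, Num D A z -> 0 <= Im z).

Lemma off_diagonal_small (t K0 e B eta : R) (u w : H) :
  homogeneous_K_ge H D A t K0 ->
  0 < e -> 1 <= B -> 0 < eta ->
  e * (144 * (B * B)) < Rmin 1 (Rmin (eta * eta) (t * t)) -> 32 * B < K0 * (eta * eta) ->
  D u -> hnorm u = 1 -> 0 <= Re (inner (A u) u) <= e -> Im (inner (A u) u) <= e ->
  D w -> hnorm2 w <= B -> hnorm2 (A w) <= B -> hnorm2 (As w) <= B ->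
  Cnorm2 (inner (A u) w) < eta * eta /\ Cnorm2 (inner (A w) u) < eta * eta.
Proof.
  intros hK he hB heta hsmall hK0 Du hu hz0re hz0im Dw hw hAw hAsw.
  assert (hu2 : hnorm2 u = 1) by (rewrite hnorm2_hnorm, hu; ring).
  assert (hcs := cauchy_schwarz H).
  assert (hform : forall s, inner (A (vadd u (vscal s w))) (vadd u (vscal s w)) =
      pencil (inner (A u) u) (inner (A u) w) (inner (A w) u) (inner (A w) w) s).
  { intro s. destruct (linear_operator_combination H D A Hlin u w s Du Dw) as [_ ->].
    apply inner_pencil. }
  assert (hnorm_form : forall s, hnorm2 (vadd u (vscal s w)) =
      Re (pencil (RtoC 1) (inner u w) (inner w u) (RtoC (hnorm2 w)) s)).
  { intro s. unfold hnorm2 at 1. rewrite inner_pencil, !inner_self, hu2. reflexivity. }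
  apply pencil_coefficients_small with (z0 := inner (A u) u) (e := e) (B := B) (t := t) (K0 := K0)
    (c := inner u w) (c' := inner w u) (W := hnorm2 w) (q := inner (A w) w); auto.
  - rewrite (proj2 Hadj w u (HDsub w Dw) Du). specialize (hcs u (As w)). nra.
  - specialize (hcs (A w) u). nra.
  - specialize (hcs (A w) w). pose proof (hnorm2_ge0 H (A w)). pose proof (hnorm2_ge0 H w). nra.
  - specialize (hcs u w). nra.
  - specialize (hcs w u). nra.
  - split; [apply hnorm2_ge0 | exact hw].
  - intro s. rewrite <- hform. apply (Im_inner_A_nonneg H D A Hlin Hnum).
    apply (linear_operator_combination H D A Hlin u w s Du Dw).
  - intro s. rewrite <- hform, <- hnorm_form. apply hK.
    apply (linear_operator_combination H D A Hlin u w s Du Dw).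
Qed.

End OffDiagonal.

Theorem mainTheorem7 (H : PreHilbert) (Hcomp : complete H)
  (D : H -> Prop) (A : H -> H) (Ds : H -> Prop) (As : H -> H)
  (Hlin : linear_operator D A) (Hdense : densely_defined D)
  (Hclosed : closed_operator D A) (Hadj : is_adjoint D A Ds As)
  (HDsub : forall x, D x -> Ds x)
  (Hnum : forall z, Num D A z -> 0 <= Im z)
  (HK : forall a : nat -> R, (forall n, 0 < a n) -> Un_cv a 0 -> K_to_infty D A a)
  (alpha : Cplx) (Halpha : Num D A alpha)
  (HRe : 0 < Re alpha < 1) (HIm : 0 < Im alpha < 1) (Habs : Cabs alpha < 1)
  (Hseg : forall t, 0 < t <= 1 -> Num D A (Cmul (RtoC t) alpha))
  (eps : nat -> R) (Heps : forall n, 0 < eps n < 1) (Heps0 : Un_cv eps 0)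
  (u : nat -> H) (HuD : forall n, D (u n)) (Hu1 : forall n, hnorm (u n) = 1)
  (HAu : forall n, inner (A (u n)) (u n) = Cmul (RtoC (eps n)) alpha)
  (f : nat -> H) (HfD : forall n, D (f n))
  (Hfb : exists M, forall n,
      hnorm (f n) <= M /\ hnorm (A (f n)) <= M /\ hnorm (As (f n)) <= M) :
  Un_cv (fun n => Cabs (inner (f n) (A (u n))) + Cabs (inner (f n) (As (u n)))) 0.
Proof.
  destruct Hfb as [M HM]. set (B := M * M + 1).
  assert (hB : 1 <= B) by (unfold B; nra).
  intros delta hdelta. set (eta := delta / 2).
  assert (heta : 0 < eta) by (unfold eta; lra).
  destruct (K_to_infty_homogeneous H D A Hlin eps (fun n => proj1 (Heps n))
    (HK eps (fun n => proj1 (Heps n)) Heps0) (64 * B / (eta * eta))) as [t [ht hKt]].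
  destruct (Un_cv_0_eventually_lt eps (144 * (B * B)) (Rmin 1 (Rmin (eta * eta) (t * t))))
    as [N HN]; auto.
  { intro n. apply Rlt_le, Heps. }
  { apply Rmult_lt_0_compat; nra. }
  { repeat apply Rmin_pos; try apply Rmult_lt_0_compat; lra. }
  exists N. intros n hn. destruct (HM n) as [hf [hAf hAsf]]. pose proof (Heps n).
  destruct (off_diagonal_small H D A Ds As Hlin Hadj HDsub Hnum t (64 * B / (eta * eta))
    (eps n) B eta (u n) (f n) hKt) as [hp hr]; auto; try lra.
  - replace (64 * B / (eta * eta) * (eta * eta)) with (64 * B) by (field; lra). lra.
  - rewrite HAu; simpl; split; nra.
  - rewrite HAu; simpl; nra.
  - apply hnorm2_le_sq_succ, hf.
  - apply hnorm2_le_sq_succ, hAf.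
  - apply hnorm2_le_sq_succ, hAsf.
  - rewrite (inner_conj H (A (u n)) (f n)), Cabs_Cconj.
    rewrite <- (proj2 Hadj (u n) (f n) (HDsub _ (HuD n)) (HfD n)).
    apply Cabs_lt_of_Cnorm2_lt in hp; [|lra]. apply Cabs_lt_of_Cnorm2_lt in hr; [|lra].
    unfold R_dist. rewrite Rminus_0_r, Rabs_pos_eq; [unfold eta in *; lra|].
    apply Rplus_le_le_0_compat; apply sqrt_pos.
Qed.
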